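(* Let $\mu\in\mathcal P_c^*(\mathbb R^2)$. Then the functions $\theta\mapsto\operatorname{mean}(\widehat{\mathcal R}_\theta[\mu])$ from $\mathbb S_1$ to $\mathbb R$ and $\theta\mapsto\operatorname{std}(\widehat{\mathcal R}_\theta[\mu])$ from $\mathbb S_1$ to $[0,\infty)$ are continuous.
   Context: $\mathbb S_1=\{x\in\mathbb R^2:\|x\|=1\}$; $\mathcal R_\theta[\mu]=(\langle\cdot,\theta\rangle)_\#\mu$. Fix a reference Borel probability measure $\rho$ on $\mathbb R$ without atoms. For a probability measure $\nu$ on $\mathbb R$ with $F_\nu(t)=\nu((-\infty,t])$, $F_\nu^{[-1]}(t)=\inf\{s:F_\nu(s)>t\}$ and the CDT is $\hat\nu=F_\nu^{[-1]}\circ F_\rho$; $\widehat{\mathcal R}_\theta[\mu]$ is the CDT of $\mathcal R_\theta[\mu]$. For $g\in L^2_\rho(\mathbb R)$, $\operatorname{mean}(g)=\int g\,\mathrm d\rho$, $\operatorname{std}(g)=(\int|g-\operatorname{mean}(g)|^2\mathrm d\rho)^{1/2}$. $\mathcal P_c^*(\mathbb R^2)$ is the set of compactly supported Borel probability measures on $\mathbb R^2$ whose support has affine hull of dimension $>1$. *)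

From HB Require Import structures.
From mathcomp Require Import all_boot all_order all_algebra.
From mathcomp Require Import all_classical all_reals all_analysis.
Set Implicit Arguments. Unset Strict Implicit. Unset Printing Implicit Defensive.
Import Order.TTheory GRing.Theory Num.Theory.
Import numFieldNormedType.Exports.
Local Open Scope classical_set_scope.
Local Open Scope ring_scope.

Section Defs.
Variable R : realType.

Definition dot2 (x y : R * R) : R := x.1 * y.1 + x.2 * y.2.

Definition S1 : set (R * R) := [set th | th.1 ^+ 2 + th.2 ^+ 2 = 1].

Definition supp2 (mu : set (R * R) -> \bar R) : set (R * R) :=
  [set x | forall U : set (R * R), open U -> U x -> (0 < mu U)%E].

(* A subset of R^2 has affine hull of dimension <= 1 iff it lies on some
   affine line {x | a x1 + b x2 = c} with (a,b) <> (0,0). *)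
Definition in_a_line (A : set (R * R)) : Prop :=
  exists (a b c : R), (a, b) <> (0, 0) /\
    A `<=` [set x | a * x.1 + b * x.2 = c].

Definition Pc_star (mu : set (R * R) -> \bar R) : Prop :=
  compact (supp2 mu) /\ ~ in_a_line (supp2 mu).

(* CDF of the Radon projection R_theta[mu] = (<., theta>)_# mu *)
Definition cdf_proj (mu : set (R * R) -> \bar R) (th : R * R) (t : R) : R :=
  fine (mu [set x | dot2 x th <= t]).

Definition cdf (rho : set R -> \bar R) (t : R) : R :=
  fine (rho [set s | s <= t]).

Definition gen_inv (F : R -> R) (t : R) : R := inf [set s | t < F s].

Definition cdt_proj (rho : set R -> \bar R) (mu : set (R * R) -> \bar R)
  (th : R * R) : R -> R :=
  fun t => gen_inv (cdf_proj mu th) (cdf rho t).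

Definition meanr d (T : measurableType d) (rho : {measure set T -> \bar R})
  (g : T -> R) : R := Rintegral rho setT g.

Definition stdr d (T : measurableType d) (rho : {measure set T -> \bar R})
  (g : T -> R) : R :=
  Num.sqrt (Rintegral rho setT (fun t => (g t - meanr rho g) ^+ 2)).

End Defs.

From HB Require Import structures.
From mathcomp Require Import all_boot all_order all_algebra.
From mathcomp Require Import all_classical all_reals all_analysis.
From mathcomp Require Import measurable_realfun ring lra.
Import Order.TTheory GRing.Theory Num.Theory.
Import numFieldNormedType.Exports.
Local Open Scope classical_set_scope.
Local Open Scope ring_scope.

(* Since rho has no atoms, F_rho pushes rho forward to the uniform law on
   [0, 1], and the quantile function of a law pushes the uniform law back to
   that law.  Hence the CDT of R_theta[mu] has law R_theta[mu] under rho, so its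
   mean and variance are the first two moments of x |-> <x, theta> under mu.
   These exist because mu has compact support, and they are polynomials in
   theta whose coefficients are moments of mu; the mean and the standard
   deviation are therefore continuous in theta. *)

Section sublevel_sets.
Context {d} {T : measurableType d} {R : realType} {p : T -> R}.
Hypothesis mp : measurable_fun setT p.

Lemma measurable_sublevel t : measurable [set x | p x <= t].
Proof.
rewrite -[X in measurable X]setTI.
by apply: measurable_fun_le => //; exact: measurable_cst.
Qed.

Lemma measurable_superlevel t : measurable [set x | t <= p x].
Proof.
rewrite -[X in measurable X]setTI.
by apply: measurable_fun_le => //; exact: measurable_cst.
Qed.

Lemma measurable_strict_sublevel t : measurable [set x | p x < t].
Proof.
rewrite (_ : [set x | _] = ~` [set x | t <= p x]).
  exact/measurableC/measurable_superlevel.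
by apply/seteqP; split => x /=; rewrite ltNge => /negP.
Qed.

End sublevel_sets.

Section monotone_measure_bounds.
Context {d} {T : measurableType d} {R : realType} (P : probability T R).
Local Open Scope ereal_scope.

Lemma measure_bigcap_ge (F : (set T)^nat) (v : \bar R) :
  (forall n, measurable (F n)) -> nonincreasing_seq F ->
  (forall n, v <= P (F n)) -> v <= P (\bigcap_n F n).
Proof.
move=> mF F_dec vF.
have PF : (P \o F) n @[n --> \oo] --> P (\bigcap_n F n).
  apply: nonincreasing_cvg_mu => //; last exact: bigcapT_measurable.
  by rewrite (le_lt_trans (probability_le1 _ _)) ?ltry.
by rewrite -(cvg_lim _ PF) //; apply: lime_ge; [exact: cvgP PF|exact: nearW].
Qed.

Lemma measure_bigcup_le (F : (set T)^nat) (v : \bar R) :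
  (forall n, measurable (F n)) -> nondecreasing_seq F ->
  (forall n, P (F n) <= v) -> P (\bigcup_n F n) <= v.
Proof.
move=> mF F_inc Fv.
have PF : (P \o F) n @[n --> \oo] --> P (\bigcup_n F n).
  by apply: nondecreasing_cvg_mu => //; exact: bigcupT_measurable.
by rewrite -(cvg_lim _ PF) //; apply: lime_le; [exact: cvgP PF|exact: nearW].
Qed.

End monotone_measure_bounds.

Definition cdf_of {T : Type} {R : realType} (P : set T -> \bar R) (p : T -> R)
  (t : R) : R := fine (P [set x | p x <= t]).

Section cdf_of_theory.
Context {d} {T : measurableType d} {R : realType} (P : probability T R).
Context {p : T -> R} (mp : measurable_fun setT p).
Local Notation F := (cdf_of P p).

Lemma cdf_ofE t : P [set x | p x <= t] = (F t)%:E.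
Proof. by rewrite fineK// fin_num_measure//; exact: measurable_sublevel. Qed.

Lemma cdf_of_ge0 t : 0 <= F t.
Proof. by rewrite -lee_fin -cdf_ofE. Qed.

Lemma cdf_of_le1 t : F t <= 1.
Proof.
by rewrite -lee_fin -cdf_ofE probability_le1//; exact: measurable_sublevel.
Qed.

Lemma cdf_of_nondecreasing : {homo F : s t / s <= t}.
Proof.
move=> s t st; rewrite -lee_fin -!cdf_ofE le_measure ?inE //;
  do ?exact: measurable_sublevel.
by move=> x /= /le_trans; apply.
Qed.

Lemma measurable_cdf_of : measurable_fun setT F.
Proof. exact: nondecreasing_measurable cdf_of_nondecreasing. Qed.

Lemma cdf_of_right_continuous a v : (forall t, a < t -> v <= F t) -> v <= F a.
Proof.
move=> vF; rewrite -lee_fin -cdf_ofE.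
have -> : [set x | p x <= a] = \bigcap_n [set x | p x <= a + n.+1%:R^-1].
  apply/seteqP; split => [x pa n _|x pa]; first by rewrite /= ler_wpDr.
  rewrite /= leNgt; apply/negP => /ltr_add_invr[k]; apply/negP.
  by rewrite -leNgt; exact: pa.
apply: measure_bigcap_ge => [n|m n mn|n]; first exact: measurable_sublevel.
  apply/subsetPset => x /= /le_trans; apply.
  by rewrite lerD2l lef_pV2 ?posrE ?ler_nat.
by rewrite cdf_ofE lee_fin vF// ltrDl.
Qed.

Lemma measure_strict_sublevel_le a v :
  (forall t, t < a -> F t <= v) -> (P [set x | (p x < a)%R] <= v%:E)%E.
Proof.
move=> Fv.
have -> : [set x | p x < a] = \bigcup_n [set x | p x <= a - n.+1%:R^-1].
  apply/seteqP; split => [x /ltr_add_invr[k pk]|x [n _ /= pn]].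
    by exists k => //=; rewrite lerBrDr ltW.
  by rewrite (le_lt_trans pn)// ltrBlDr ltrDl.
apply: measure_bigcup_le => [n|m n mn|n]; first exact: measurable_sublevel.
  apply/subsetPset => x /= /le_trans; apply.
  by rewrite lerD2l lerN2 lef_pV2 ?posrE ?ler_nat.
by rewrite cdf_ofE lee_fin Fv// ltrBlDr ltrDl.
Qed.

Lemma cdf_of_small v : 0 < v -> exists t, F t < v.
Proof.
move=> v0; apply/not_existsP => Fv.
suff : (v%:E <= P (\bigcap_n [set x | (p x <= - n%:R)%R]))%E.
  rewrite (_ : \bigcap_n _ = set0) ?measure0 ?lee_fin ?leNgt ?v0//.
  apply/seteqP; split => // x /(_ (Num.bound `|p x|) I) /=.
  rewrite lerNr => /le_trans/(_ (ler_norm _)); rewrite normrN.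
  by move/(lt_le_trans (archi_boundP (normr_ge0 _))); rewrite ltxx.
apply: measure_bigcap_ge => [n|m n mn|n]; first exact: measurable_sublevel.
  by apply/subsetPset => x /= /le_trans; apply; rewrite lerN2 ler_nat.
by rewrite cdf_ofE lee_fin leNgt; apply/negP/Fv.
Qed.

Lemma cdf_of_large v : v < 1 -> exists t, v < F t.
Proof.
move=> v1; apply/not_existsP => Fv.
suff : (P (\bigcup_n [set x | (p x <= n%:R)%R]) <= v%:E)%E.
  rewrite (_ : \bigcup_n _ = setT) ?probability_setT ?lee_fin ?leNgt ?v1//.
  apply/seteqP; split => // x _; exists (Num.bound `|p x|) => //=.
  exact/ltW/(le_lt_trans (ler_norm _))/archi_boundP.
apply: measure_bigcup_le => [n|m n mn|n]; first exact: measurable_sublevel.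
  by apply/subsetPset => x /= /le_trans; apply; rewrite ler_nat.
by rewrite cdf_ofE lee_fin leNgt; apply/negP/Fv.
Qed.

End cdf_of_theory.

Section atomless_cdf.
Context {R : realType} {rho : probability R R}.
Hypothesis rho_atomless : forall t : R, rho [set t] = 0%E.
Local Notation Fr := (cdf_of rho id).
Let mid := @measurable_id _ R setT.
Let mFr : measurable_fun setT Fr := measurable_cdf_of rho mid.
Local Open Scope ereal_scope.

Lemma measure_lt_cdf t : rho [set s | (s < t)%R] = (Fr t)%:E.
Proof.
rewrite -(cdf_ofE rho mid).
rewrite (_ : [set s | (s <= t)%R] = [set s | (s < t)%R] `|` [set t]).
  rewrite measureU //= ?rho_atomless ?adde0//.
    exact: measurable_strict_sublevel.
  by rewrite -subset0 => s [/= st ts]; move: st; rewrite ts ltxx.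
apply/seteqP; split => s /=; last by case=> [/ltW|->].
by rewrite le_eqVlt => /orP[/eqP ->|]; [right|left].
Qed.

Lemma ge_measure_cdf_lt v : (v <= 1)%R -> v%:E <= rho [set t | (Fr t < v)%R].
Proof.
move=> v1; have [v0|v0] := leP v 0%R.
  by rewrite (le_trans _ (measure_ge0 _ _))// lee_fin.
set D := [set t | (Fr t < v)%R].
have D_down s t : (s <= t)%R -> D t -> D s.
  by move=> st; apply: le_lt_trans; exact: cdf_of_nondecreasing.
have [t0 Dt0] : D !=set0 := cdf_of_small rho mid _ v0.
have [D_ub|D_unb] := pselect (has_ubound D); last first.
  suff -> : D = setT by rewrite probability_setT lee_fin.
  apply/seteqP; split => // t _; apply: contrapT => Dt; apply: D_unb.
  exists t => s Ds; rewrite leNgt; apply/negP => /ltW ts.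
  exact/Dt/(D_down _ _ ts).
have v_le_Fsup : (v <= Fr (sup D))%R.
  apply: (cdf_of_right_continuous rho mid) => t supt; rewrite leNgt.
  by apply/negP => Dt; move: supt; rewrite ltNge ub_le_sup.
apply: (@le_trans _ _ (rho [set s | (s < sup D)%R])).
  by rewrite measure_lt_cdf lee_fin.
apply: le_measure; rewrite ?inE.
- exact: measurable_strict_sublevel mid _.
- exact: measurable_strict_sublevel mFr _.
- move=> t /= /(sup_gt (ex_intro _ t0 Dt0))[s Ds ts].
  exact/(D_down _ _ (ltW ts)).
Qed.

Lemma le_measure_cdf_le v :
  (0 <= v < 1)%R -> rho [set t | (Fr t <= v)%R] <= v%:E.
Proof.
move=> /andP[v0 v1]; set D := [set t | (Fr t <= v)%R].
have [->|/set0P[d0 Dd0]] := eqVneq D set0; first by rewrite measure0 lee_fin.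
have [t1 Ft1] := cdf_of_large rho mid _ v1.
have D_ub : ubound D t1.
  move=> s Ds; rewrite leNgt; apply/negP => /ltW /(cdf_of_nondecreasing rho mid).
  by move/(lt_le_trans Ft1); rewrite ltNge Ds.
apply: (@le_trans _ _ (rho [set s | (s <= sup D)%R])).
  apply: le_measure; rewrite ?inE.
  - exact: measurable_sublevel mFr _.
  - exact: measurable_sublevel mid _.
  - by move=> t Dt; apply: ub_le_sup => //; exists t1.
rewrite (cdf_ofE rho mid) -measure_lt_cdf.
apply: (measure_strict_sublevel_le rho mid).
move=> t /(sup_gt (ex_intro _ d0 Dd0))[s Ds ts].
exact: le_trans (cdf_of_nondecreasing rho mid _ _ (ltW ts)) Ds.
Qed.

End atomless_cdf.

Section quantile.
Context {R : realType} {F : R -> R} {B : R}.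
Hypothesis F_nd : {homo F : s t / s <= t}.
Hypothesis F_right_continuous :
  forall a v, (forall t, a < t -> v <= F t) -> v <= F a.
Hypothesis F_le1 : forall s, F s <= 1.
Hypothesis F_low : forall s, s < - B -> F s = 0.
Hypothesis F_high : forall s, B <= s -> F s = 1.
Local Notation Q := (gen_inv F).

Let B_ge0 : 0 <= B.
Proof.
rewrite leNgt; apply/negP => B0.
have BB : B < - B by lra.
by have := F_low _ BB; rewrite F_high// => /eqP; rewrite oner_eq0.
Qed.

Let level_set_lb u : 0 <= u -> lbound [set s | u < F s] (- B).
Proof.
by move=> u0 s; rewrite /= leNgt; apply: contraTN => /F_low ->; rewrite -leNgt.
Qed.

Let level_set_B u : u < 1 -> [set s | u < F s] B.
Proof. by rewrite /= F_high. Qed.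

Lemma gen_inv_le u s : 0 <= u -> u < F s -> Q u <= s.
Proof.
by move=> u0 us; apply: ge_inf => //; exists (- B); exact: level_set_lb.
Qed.

Lemma lt_gen_inv u s : u < 1 -> F s < u -> s < Q u.
Proof.
move=> u1; apply: contraTT; rewrite -!leNgt => Qs.
apply: F_right_continuous => t st.
have [e ue et] := inf_lt (ex_intro _ B (level_set_B _ u1)) (le_lt_trans Qs st).
exact/ltW/(lt_le_trans ue)/F_nd/ltW.
Qed.

Lemma gen_inv_nondecreasing u u' : 0 <= u -> u <= u' -> u' < 1 -> Q u <= Q u'.
Proof.
move=> u0 uu' u'1; apply: lb_le_inf; first by exists B; exact: level_set_B.
by move=> s /= /(le_lt_trans uu'); exact: gen_inv_le.
Qed.

(* The defining set is empty, and [inf set0] is 0. *)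
Lemma gen_inv1 : Q 1 = 0.
Proof.
rewrite /gen_inv (_ : [set s | _] = set0) ?inf0//.
by apply/seteqP; split => s //=; rewrite ltNge F_le1.
Qed.

Lemma gen_inv_bounded u : 0 <= u <= 1 -> `|Q u| <= B.
Proof.
case/andP => u0; rewrite le_eqVlt => /predU1P[->|u1].
  by rewrite gen_inv1 normr0.
rewrite ler_norml gen_inv_le ?F_high// andbT.
by apply: lb_le_inf; [exists B; exact: level_set_B|exact: level_set_lb].
Qed.

End quantile.

Lemma measure_unique_rays {R : realType} (m1 m2 : {measure set R -> \bar R}) :
  (forall r, m1 [set s | s <= r] = m2 [set s | s <= r]) ->
  (forall r, (m1 [set s | (s <= r)%R] < +oo)%E) ->
  forall A, measurable A -> m1 A = m2 A.
Proof.
move=> m12 m1oo A mA.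
have mray r : measurable [set s : R | s <= r].
  exact: measurable_sublevel (@measurable_id _ R setT) r.
have m2oo r : (m2 [set s | (s <= r)%R] < +oo)%E by rewrite -m12.
have ocE (a b : R) : a < b ->
    `]a, b]%classic = [set s | s <= b] `\` [set s | s <= a].
  move=> ab; apply/seteqP; split => x /=; rewrite in_itv /=.
    by case/andP => ax xb; split => //; apply/negP; rewrite -ltNge.
  by case=> xb xa; rewrite xb andbT ltNge; apply/negP.
have rayI (a b : R) : a < b ->
    [set s | s <= b] `&` [set s | s <= a] = [set s | s <= a].
  by move=> /ltW ab; apply/setIidr => s /= /le_trans; apply.
apply: (@measure_unique _ R R (@ocitv R)
  (fun k : nat => `](- k%:R)%R, (k%:R)%R]%classic) _ _ _ _ m1 m2 _ _ A mA).
- reflexivity.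
- exact: ocitvI.
- by move=> k; exact: is_ocitv.
- exact: bigcup_itvT.
- move=> _ [[a b] _ <-]; have [ab|ba] := ltP a b; last first.
    by rewrite set_itv_ge ?measure0// bnd_simp -leNgt.
  by rewrite ocE// !measureD ?rayI//= !m12.
- move=> k; apply: le_lt_trans (m1oo k%:R).
  by apply: le_measure; rewrite ?inE//= => x /andP[].
Qed.

Lemma integrable_ae_bounded {d} {T : measurableType d} {R : realType}
    (P : {finite_measure set T -> \bar R}) (f : T -> R) (C : R) :
  measurable_fun setT f -> {ae P, forall x, `|f x| <= C} ->
  P.-integrable setT (EFin \o f).
Proof.
move=> mf fC; apply/integrableP; split; first exact/measurable_EFinP.
apply: (@le_lt_trans _ _ (\int[P]_(x in setT) `|C|%:E))%E.
  apply: ae_ge0_le_integral => //; first exact/measurableT_comp/measurable_EFinP.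
  apply: filterS fC => x fxC _ /=.
  by rewrite lee_fin (le_trans fxC (ler_norm _)).
by rewrite integral_cst// lte_mul_pinfty// fin_num_fun_lty// fin_num_measure.
Qed.

Lemma Rintegral_sqrB_mean {d} {T : measurableType d} {R : realType}
    (P : probability T R) (f : T -> R) :
  P.-integrable setT (EFin \o f) ->
  P.-integrable setT (EFin \o (fun x => f x ^+ 2)) ->
  Rintegral P setT (fun x => (f x - Rintegral P setT f) ^+ 2) =
  Rintegral P setT (fun x => f x ^+ 2) - Rintegral P setT f ^+ 2.
Proof.
move=> if1 if2; set c := Rintegral P setT f.
have ic : P.-integrable setT (EFin \o cst (c ^+ 2)).
  exact: finite_measure_integrable_cst.
have icf : P.-integrable setT (EFin \o (fun x => 2 * c * f x)).
  exact: eq_integrable (integrableZl measurableT (2 * c) if1).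
have ifcf : P.-integrable setT (EFin \o (fun x => f x ^+ 2 - 2 * c * f x)).
  exact: eq_integrable (integrableB measurableT if2 icf).
transitivity (Rintegral P setT (fun x => (f x ^+ 2 - 2 * c * f x) + c ^+ 2)).
  by apply: eq_Rintegral => x _; ring.
rewrite RintegralD// RintegralB// RintegralZl// Rintegral_cst//= probability_setT.
rewrite /= mulr1 -/c; ring.
Qed.

(* [cdf rho], [cdf_proj mu th] and [cdt_proj rho mu th] are by definition
   [cdf_of rho id], [cdf_of mu p] and [cdt_of rho mu p] with p := dot2^~ th. *)
Definition cdt_of {R : realType} (rho : set R -> \bar R) {T : Type}
  (P : set T -> \bar R) (p : T -> R) (t : R) : R :=
  gen_inv (cdf_of P p) (cdf_of rho id t).

Section cdt_transport.
Context {R : realType} {rho : probability R R}.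
Hypothesis rho_atomless : forall t : R, rho [set t] = 0%E.
Context {d} {T : measurableType d} (P : probability T R).
Context {p : T -> R} (mp : measurable_fun setT p).
Context (B : R) (p_bounded : {ae P, forall x, `|p x| <= B}).
Local Notation F := (cdf_of P p).
Local Notation Fr := (cdf_of rho id).
Local Notation g := (cdt_of rho P p).
Let mid := @measurable_id _ R setT.
Let mFr : measurable_fun setT Fr := measurable_cdf_of rho mid.

Let F_low s : s < - B -> F s = 0.
Proof.
move=> sB; rewrite /cdf_of; suff -> : P [set x | p x <= s] = 0%E by [].
apply/negligibleP; first exact: measurable_sublevel.
apply: negligibleS p_bounded => x /= ps; rewrite ler_norml => /andP[Bp _].
by have := le_lt_trans (le_trans Bp ps) sB; rewrite ltxx.
Qed.

Let F_high s : B <= s -> F s = 1.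
Proof.
move=> Bs; have : P (~` [set x | p x <= s]) = 0%E.
  apply/negligibleP; first exact/measurableC/measurable_sublevel.
  apply: negligibleS p_bounded => x /= /negP; rewrite -ltNge => sp.
  rewrite ler_norml => /andP[_ pB].
  by have := lt_le_trans sp (le_trans pB Bs); rewrite ltxx.
rewrite probability_setC; last exact: measurable_sublevel.
by rewrite cdf_ofE// -EFinB => /eqP; rewrite eqe subr_eq0 => /eqP <-.
Qed.

Let F_nd := cdf_of_nondecreasing P mp.
Let F_right_continuous := cdf_of_right_continuous P mp.
Let F_le1 := cdf_of_le1 P mp.

Lemma cdt_of_bounded t : `|g t| <= B.
Proof.
apply: (gen_inv_bounded F_le1 F_low F_high).
by rewrite cdf_of_ge0 ?cdf_of_le1.
Qed.

Lemma measurable_cdt_of : measurable_fun setT g.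
Proof.
(* [g] is nondecreasing where [Fr < 1] and vanishes elsewhere. *)
pose g_up t := if Fr t < 1 then g t else B.
have -> : g = fun t => if Fr t < 1 then g_up t else 0.
  apply: funext => t; rewrite /g_up; case: ifPn => [->//|/negbTE Fr1].
  rewrite /cdt_of (_ : Fr t = 1) ?(gen_inv1 F_le1)//.
  by apply/eqP; rewrite eq_le cdf_of_le1// leNgt Fr1.
apply: measurable_fun_ifT; last exact: measurable_cst.
  exact: (measurable_fun_ltr (f := Fr) (g := cst 1) mFr).
apply: nondecreasing_measurable => // s t st; rewrite /g_up.
have Fst := cdf_of_nondecreasing rho mid _ _ st.
case: ifPn => Fs1; case: ifPn => Ft1 //.
- by apply: (gen_inv_nondecreasing F_low F_high); rewrite ?cdf_of_ge0.
- by have := cdt_of_bounded s; rewrite ler_norml => /andP[].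
- by move: Fs1; rewrite (le_lt_trans Fst Ft1).
Qed.

Let rho_cdf_lt1 : rho [set t | Fr t < 1] = 1%E.
Proof.
apply/eqP; rewrite eq_le probability_le1 ?ge_measure_cdf_lt//.
exact: measurable_strict_sublevel mFr 1.
Qed.

Let rho_cdf_ge1 : rho [set t | 1 <= Fr t] = 0%E.
Proof.
rewrite (_ : [set t | _] = ~` [set t | Fr t < 1]).
  rewrite probability_setC ?rho_cdf_lt1 ?subee//.
  exact: measurable_strict_sublevel mFr 1.
by apply/seteqP; split => t /=; rewrite leNgt => /negP.
Qed.

(* [{Fr < F s} <= {g <= s} <= {Fr <= F s} `|` {Fr = 1}], and since [rho] has no
   atoms the two outer sets have measure [F s]. *)
Lemma cdt_of_sublevel s : rho [set t | g t <= s] = P [set x | p x <= s].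
Proof.
rewrite cdf_ofE//; set v := F s.
apply/eqP; rewrite eq_le; apply/andP; split; last first.
  apply: le_trans (ge_measure_cdf_lt rho_atomless _ (F_le1 s)) _.
  apply: le_measure; rewrite ?inE.
  - exact: measurable_strict_sublevel mFr v.
  - exact: measurable_sublevel measurable_cdt_of s.
  by move=> t /= Frt; apply: (gen_inv_le F_low) => //; exact: cdf_of_ge0.
have [->|v_lt1] := eqVneq v 1.
  by rewrite probability_le1//; exact: measurable_sublevel measurable_cdt_of s.
have {}v_lt1 : v < 1 by rewrite lt_neqAle v_lt1 F_le1.
apply: (@le_trans _ _ (rho ([set t | Fr t <= v] `|` [set t | 1 <= Fr t]))).
  apply: le_measure; rewrite ?inE.
  - exact: measurable_sublevel measurable_cdt_of s.
  - apply: measurableU; first exact: measurable_sublevel.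
    exact: measurable_superlevel.
  move=> t /= gs; have [Fr1|Fr1] := leP 1 (Fr t); [by right|left].
  rewrite leNgt; apply/negP => /(lt_gen_inv F_nd F_right_continuous F_high _ _ Fr1).
  by rewrite ltNge gs.
apply: le_trans (measureU2 _ _ _) _.
- exact: measurable_sublevel mFr v.
- exact: measurable_superlevel mFr 1.
rewrite /= rho_cdf_ge1 adde0; apply: (le_measure_cdf_le rho_atomless).
by rewrite cdf_of_ge0 ?v_lt1.
Qed.

Lemma measure_preimage_cdt_of A :
  measurable A -> rho (g @^-1` A) = P (p @^-1` A).
Proof.
move=> mA; apply: (measure_unique_rays (pushforward rho g) (pushforward P p)) => //.
- exact: measurable_cdt_of.
- by move=> mg r; exact: cdt_of_sublevel.
- move=> mg r; rewrite (le_lt_trans (probability_le1 _ _)) ?ltry//.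
  exact: measurable_sublevel measurable_cdt_of r.
Qed.

Lemma Rintegral_cdt_of (h : R -> R) (C : R) : measurable_fun setT h ->
  (forall y, `|y| <= B -> `|h y| <= C) ->
  Rintegral rho setT (h \o g) = Rintegral P setT (h \o p).
Proof.
move=> mh hC; have mEh : measurable_fun setT (EFin \o h) by exact/measurable_EFinP.
have ihg : rho.-integrable (g @^-1` setT) ((EFin \o h) \o g).
  rewrite preimage_setT; apply: (integrable_ae_bounded _ _ C).
    exact: measurableT_comp measurable_cdt_of.
  by apply: aeW => t; exact/hC/cdt_of_bounded.
have ihp : P.-integrable (p @^-1` setT) ((EFin \o h) \o p).
  rewrite preimage_setT; apply: (integrable_ae_bounded _ _ C).
    exact: measurableT_comp mp.
  by apply: filterS p_bounded => x /hC.
rewrite /Rintegral; congr fine.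
change (\int[rho]_(t in g @^-1` setT) ((EFin \o h) \o g) t =
        \int[P]_(x in p @^-1` setT) ((EFin \o h) \o p) x)%E.
rewrite -(integral_pushforward measurable_cdt_of mEh ihg measurableT).
rewrite -(integral_pushforward mp mEh ihp measurableT).
apply: eq_measure_integral; first exact: measurable_cdt_of.
by move=> mg A mA _; exact: measure_preimage_cdt_of.
Qed.

Lemma meanr_cdt_of : meanr rho g = Rintegral P setT p.
Proof. exact: (Rintegral_cdt_of _ _ mid (fun y yB => yB)). Qed.

Lemma stdr_cdt_of : stdr rho g =
  Num.sqrt (Rintegral P setT (fun x => p x ^+ 2) - Rintegral P setT p ^+ 2).
Proof.
rewrite /stdr meanr_cdt_of; set c := Rintegral P setT p.
have mh : measurable_fun setT (fun y : R => (y - c) ^+ 2).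
  exact/measurable_funX/measurable_funB.
rewrite (Rintegral_cdt_of _ ((B + `|c|) ^+ 2) mh); last first.
  move=> y yB; have B0 : 0 <= B := le_trans (normr_ge0 _) yB.
  rewrite normrX lerXn2r ?nnegrE ?addr_ge0//.
  by rewrite (le_trans (ler_normB _ _))// lerD2r.
rewrite Rintegral_sqrB_mean//.
- by apply: (integrable_ae_bounded _ _ B).
- apply: (integrable_ae_bounded _ _ (B ^+ 2)); first exact: measurable_funX.
  apply: filterS p_bounded => x pB; have B0 : 0 <= B := le_trans (normr_ge0 _) pB.
  by rewrite normrX lerXn2r ?nnegrE.
Qed.

End cdt_transport.

Lemma negligible_bigcup_countable {d} {T : measurableType d} {R : realType}
    (mu : {measure set T -> \bar R}) (I : countType) (D : set I) (F : I -> set T) :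
  (forall i, D i -> mu.-negligible (F i)) -> mu.-negligible (\bigcup_(i in D) F i).
Proof.
move=> DF; rewrite bigcup_mkcond.
pose G n := if unpickle n is Some i then (if i \in D then F i else set0) else set0.
apply: (negligibleS _ (negligible_bigcup (F := G) _)).
  by move=> x [i _ Fix]; exists (pickle i) => //; rewrite /G pickleK.
move=> n; rewrite /G; case: (unpickle n) => [i|]; last exact: negligible_set0.
by case: ifPn => [/set_mem/DF//|_]; exact: negligible_set0.
Qed.

Section grid.
Context {R : realType}.

Definition grid_itv (n : nat) (i : int) : set R :=
  [set x | i%:~R <= x * n.+1%:R] `&` [set x | x * n.+1%:R < i%:~R + 1].

Definition grid_cell (k : nat * (int * int)) : set (R * R) :=
  grid_itv k.1 k.2.1 `*` grid_itv k.1 k.2.2.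

Lemma grid_itv_floor n x : grid_itv n (Num.floor (x * n.+1%:R)) x.
Proof. by have /andP[] := mem_rg1_floor (x * n.+1%:R). Qed.

Lemma grid_itv_dist n i x y :
  grid_itv n i x -> grid_itv n i y -> `|x - y| < n.+1%:R^-1.
Proof.
move=> [/= x1 x2] [/= y1 y2].
rewrite -div1r ltr_pdivlMr// -[n.+1%:R]ger0_norm// -normrM mulrBl ltr_norml.
by apply/andP; split; lra.
Qed.

Lemma measurable_grid_cell k : measurable (grid_cell k).
Proof.
have mscale n : measurable_fun setT (fun x : R => x * n.+1%:R).
  exact: measurable_funM.
by apply: measurableX; apply: measurableI; first
  [exact: measurable_superlevel (mscale _) _
  |exact: measurable_strict_sublevel (mscale _) _].
Qed.

Lemma open_grid_cell (U : set (R * R)) x : open U -> U x ->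
  exists k, grid_cell k x /\ grid_cell k `<=` U.
Proof.
move=> oU /oU /nbhs_ballP[e e0 xeU].
have [n ne] := ltr_add_invr e0; rewrite add0r in ne.
exists (n, (Num.floor (x.1 * n.+1%:R), Num.floor (x.2 * n.+1%:R))).
split; first by split; exact: grid_itv_floor.
move=> y [/= y1 y2]; apply: xeU; split; rewrite /ball /=.
- exact: lt_trans (grid_itv_dist _ _ _ _ (grid_itv_floor _ _) y1) ne.
- exact: lt_trans (grid_itv_dist _ _ _ _ (grid_itv_floor _ _) y2) ne.
Qed.

Lemma open_measurable2 (U : set (R * R)) : open U -> measurable U.
Proof.
move=> oU; have -> : U = \bigcup_(k in [set k | grid_cell k `<=` U]) grid_cell k.
  apply/seteqP; split => [x Ux|x [k kU /kU//]].
  by have [k [kx kU]] := open_grid_cell _ _ oU Ux; exists k.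
rewrite bigcup_mkcond; apply: countable_bigcupT_measurable => // k.
by case: ifPn => // _; exact: measurable_grid_cell.
Qed.

Lemma negligible_setC_supp2 (mu : {measure set (R * R) -> \bar R}) :
  mu.-negligible (~` supp2 mu).
Proof.
apply: (negligibleS _ (negligible_bigcup_countable mu _
  [set k | mu (grid_cell k) = 0%E] grid_cell _)); last first.
  by move=> k k0; apply/negligibleP => //; exact: measurable_grid_cell.
move=> x /existsNP[U /not_implyP[oU /not_implyP[Ux /negP]]].
rewrite -leNgt => mu_le0; have [k [kx kU]] := open_grid_cell _ _ oU Ux.
exists k => //; apply/eqP; rewrite eq_le measure_ge0 andbT (le_trans _ mu_le0)//.
by rewrite le_measure ?inE//; [exact: measurable_grid_cell|exact: open_measurable2].
Qed.

Lemma compact_supp2_ae_bounded (mu : {measure set (R * R) -> \bar R}) :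
  compact (supp2 mu) -> exists M, {ae mu, forall x, `|x| <= M}.
Proof.
move=> /compact_bounded[M [_ HM]]; exists (`|M| + 1).
apply: negligibleS (negligible_setC_supp2 mu) => x /= xM sx; apply: xM.
by apply: HM => //; rewrite (le_lt_trans (ler_norm _))// ltrDl.
Qed.

End grid.

Definition monomial2 {R : realType} (i j : nat) (x : R * R) : R :=
  x.1 ^+ i * x.2 ^+ j.

Lemma measurable_monomial2 {R : realType} i j :
  measurable_fun setT (monomial2 i j : R * R -> R).
Proof.
by apply: measurable_funM; apply: measurable_funX;
  first [exact: measurable_fst|exact: measurable_snd].
Qed.

Lemma continuous_monomial2 {R : realType} i j :
  continuous (monomial2 i j : R * R -> R).
Proof.
have cont_fst : continuous (fst : R * R -> R) by move=> x; exact: cvg_fst.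
have cont_snd : continuous (snd : R * R -> R) by move=> x; exact: cvg_snd.
move=> th.
apply: (continuousM (s := fun x : R * R => x.1 ^+ i) (t := fun x => x.2 ^+ j)).
- apply: (@continuous_comp _ _ _ fst (fun y : R => y ^+ i)); first exact: cont_fst.
  exact: exprn_continuous.
- apply: (@continuous_comp _ _ _ snd (fun y : R => y ^+ j)); first exact: cont_snd.
  exact: exprn_continuous.
Qed.

Lemma measurable_dot2 {R : realType} (th : R * R) :
  measurable_fun setT (fun x : R * R => dot2 x th).
Proof. by apply: measurable_funD; apply: measurable_funM. Qed.

Section radon_projections.
Context {R : realType} {mu : probability (R * R)%type R} {M : R}.
Hypothesis mu_bounded : {ae mu, forall x, `|x| <= M}.
Local Notation moment i j := (Rintegral mu setT (monomial2 i j)).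

Lemma integrable_monomial2 i j : mu.-integrable setT (EFin \o monomial2 i j).
Proof.
apply: (integrable_ae_bounded _ _ (M ^+ i * M ^+ j)).
  exact: measurable_monomial2.
apply: filterS mu_bounded => x; rewrite prod_normE ge_max => /andP[x1M x2M].
have M0 : 0 <= M := le_trans (normr_ge0 _) x1M.
by rewrite normrM !normrX ler_pM ?exprn_ge0 ?lerXn2r ?nnegrE.
Qed.

Let integrableZ_monomial2 a i j :
  mu.-integrable setT (EFin \o (fun x => a * monomial2 i j x)).
Proof.
exact: eq_integrable (integrableZl measurableT a (integrable_monomial2 i j)).
Qed.

Lemma Rintegral_dot2 th : Rintegral mu setT (fun x => dot2 x th) =
  moment 1 0 * monomial2 1 0 th + moment 0 1 * monomial2 0 1 th.
Proof.
transitivity (Rintegral mu setT (fun x =>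
    monomial2 1 0 th * monomial2 1 0 x + monomial2 0 1 th * monomial2 0 1 x)).
  by apply: eq_Rintegral => x _; rewrite /dot2 /monomial2; ring.
rewrite RintegralD//; try exact: integrableZ_monomial2.
rewrite (RintegralZl (monomial2 1 0 th)) ?(RintegralZl (monomial2 0 1 th))//;
  try exact: integrable_monomial2.
ring.
Qed.

Lemma Rintegral_dot2_sqr th : Rintegral mu setT (fun x => dot2 x th ^+ 2) =
  moment 2 0 * monomial2 2 0 th + 2 * moment 1 1 * monomial2 1 1 th +
  moment 0 2 * monomial2 0 2 th.
Proof.
transitivity (Rintegral mu setT (fun x =>
    monomial2 2 0 th * monomial2 2 0 x + 2 * monomial2 1 1 th * monomial2 1 1 x +
    monomial2 0 2 th * monomial2 0 2 x)).
  by apply: eq_Rintegral => x _; rewrite /dot2 /monomial2; ring.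
rewrite RintegralD//; try exact: integrableZ_monomial2.
  rewrite RintegralD//; try exact: integrableZ_monomial2.
  rewrite (RintegralZl (monomial2 2 0 th)) ?(RintegralZl (2 * monomial2 1 1 th))
    ?(RintegralZl (monomial2 0 2 th))//; try exact: integrable_monomial2.
  ring.
exact: eq_integrable (integrableD measurableT (integrableZ_monomial2 _ _ _)
  (integrableZ_monomial2 _ _ _)).
Qed.

Lemma dot2_ae_bounded th :
  {ae mu, forall x, `|dot2 x th| <= M * (`|th.1| + `|th.2|)}.
Proof.
apply: filterS mu_bounded => x; rewrite prod_normE ge_max => /andP[x1M x2M].
rewrite (le_trans (ler_normD _ _))// mulrDr !normrM.
by rewrite lerD// ler_wpM2r.
Qed.

Context {rho : probability R R}.
Hypothesis rho_atomless : forall t : R, rho [set t] = 0%E.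
Local Notation mean th :=
  (moment 1 0 * monomial2 1 0 th + moment 0 1 * monomial2 0 1 th).
Local Notation second th := (moment 2 0 * monomial2 2 0 th +
  2 * moment 1 1 * monomial2 1 1 th + moment 0 2 * monomial2 0 2 th).

Lemma meanr_cdt_proj th : meanr rho (cdt_proj rho mu th) = mean th.
Proof.
rewrite -Rintegral_dot2; have := dot2_ae_bounded th.
by move/(meanr_cdt_of rho_atomless mu (measurable_dot2 th)).
Qed.

Lemma stdr_cdt_proj th :
  stdr rho (cdt_proj rho mu th) = Num.sqrt (second th - mean th ^+ 2).
Proof.
rewrite -Rintegral_dot2 -Rintegral_dot2_sqr; have := dot2_ae_bounded th.
by move/(stdr_cdt_of rho_atomless mu (measurable_dot2 th)).
Qed.

Let continuous_mean : continuous (fun th => mean th).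
Proof.
by move=> th; apply: cvgD; apply: cvgM;
  first [exact: cvg_cst|exact: continuous_monomial2].
Qed.

Lemma continuous_meanr_cdt_proj :
  continuous (fun th => meanr rho (cdt_proj rho mu th)).
Proof. by rewrite (funext meanr_cdt_proj). Qed.

Lemma continuous_stdr_cdt_proj :
  continuous (fun th => stdr rho (cdt_proj rho mu th)).
Proof.
rewrite (funext stdr_cdt_proj) => th.
apply: (@continuous_comp _ _ _ (fun th => second th - mean th ^+ 2) Num.sqrt).
  apply: cvgB; last by apply: cvgM; exact: continuous_mean.
  by apply: cvgD; [apply: cvgD|]; apply: cvgM;
    first [exact: cvg_cst|exact: continuous_monomial2].
exact: sqrt_continuous.
Qed.

End radon_projections.

Theorem lemma5 (R : realType) (rho : probability R R)
  (rho_noatom : forall t : R, rho [set t] = 0%E)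
  (mu : probability (R * R)%type R) (hmu : Pc_star mu) :
  {within (@S1 R), continuous (fun th => meanr rho (cdt_proj rho mu th))} /\
  {within (@S1 R), continuous (fun th => stdr rho (cdt_proj rho mu th))}.
Proof.
have [M mu_bounded] := compact_supp2_ae_bounded mu hmu.1.
split; apply: continuous_subspaceT.
- by have := continuous_meanr_cdt_proj mu_bounded rho_noatom.
- by have := continuous_stdr_cdt_proj mu_bounded rho_noatom.
Qed.
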